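(* Let $\mathcal L=(\Sigma,X)$ be a language and $\Lambda$ a basic fuzzy theory in $\mathcal L$. Let $\mathscr F_\Lambda\dashv\mathscr U_\Lambda$ be the free-model adjunction with counit $\epsilon$, let $\mathsf T_\Lambda=\mathscr U_\Lambda\circ\mathscr F_\Lambda$ be the associated monad on $\mathbf{Fuz}_H$, and let $\mathscr K:\mathbf{Mod}(\Lambda)\to\mathbf{EM}(\mathsf T_\Lambda)$ be the comparison functor, sending a model $\mathcal A$ to the Eilenberg–Moore algebra $\mathscr U_\Lambda(\epsilon_{\mathcal A}):\mathsf T_\Lambda(\mathscr U_\Lambda\mathcal A)\to\mathscr U_\Lambda\mathcal A$ and acting as the identity on underlying arrows. Then $\mathscr K$ is an isomorphism of categories. In particular $\mathbf{Mod}(\Lambda)$ and the category $\mathbf{EM}(\mathsf T_\Lambda)$ of Eilenberg–Moore algebras of $\mathsf T_\Lambda$ are isomorphic.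
   Context: $H$ is a frame with bottom $\bot$. An $H$-fuzzy set is a pair $(A,\mu_A)$ of a set $A$ and a function $\mu_A:A\to H$; an arrow $f:(A,\mu_A)\to(B,\mu_B)$ is a function with $\mu_A(x)\le\mu_B(f(x))$; they form $\mathbf{Fuz}_H$. For $n\ge1$, $(A,\mu_A)^n=(A^n,\mu)$ with $\mu(a_1,\dots,a_n)=\bigwedge_i\mu_A(a_i)$. A signature $\Sigma=(O,\mathrm{ar},C)$ consists of a set $O$ of operation symbols with arity $\mathrm{ar}:O\to\{1,2,3,\dots\}$ and a set $C$ of constant symbols. A language is a pair $\mathcal L=(\Sigma,X)$ with $X$ a set of variables. $\mathrm{Terms}(\mathcal L)$ is the smallest set containing $X\sqcup C$ and containing $f(t_1,\dots,t_{\mathrm{ar}(f)})$ whenever $f\in O$ and all $t_i\in\mathrm{Terms}(\mathcal L)$. A formula is either an equation $s\equiv t$ ($s,t$ terms) or a membership proposition $\mathsf E_l(t)$ with $l\in H$ and $t$ a term. A sequent $\Gamma\vdash\psi$ is a pair of a (possibly infinite) set $\Gamma$ of formulas and a formula $\psi$. A fuzzy theory in $\mathcal L$ is a set of sequents. A theory is basic if for every sequent $\Gamma\vdash\phi$ in it, every formula of $\Gamma$ has the form $x\equiv y$ or $\mathsf E_l(x)$ with $x,y\in X$ variables ($\phi$ arbitrary). A $\Sigma$-algebra $\mathcal A=((A,\mu_A),\Sigma^{\mathcal A})$ is an $H$-fuzzy set $(A,\mu_A)$ together with, for each $f\in O$, an arrow $f^{\mathcal A}:(A,\mu_A)^{\mathrm{ar}(f)}\to(A,\mu_A)$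 of $\mathbf{Fuz}_H$ and, for each $c\in C$, an element $c^{\mathcal A}\in A$. A morphism of $\Sigma$-algebras is an arrow of $\mathbf{Fuz}_H$ between the carriers preserving all constants and commuting with all operations. An assignment is a function $\iota:X\to A$; evaluation: $x^{\mathcal A,\iota}=\iota(x)$, $c^{\mathcal A,\iota}=c^{\mathcal A}$, $f(t_1,\dots,t_n)^{\mathcal A,\iota}=f^{\mathcal A}(t_1^{\mathcal A,\iota},\dots,t_n^{\mathcal A,\iota})$. $\mathcal A\vDash_\iota s\equiv t$ iff $s^{\mathcal A,\iota}=t^{\mathcal A,\iota}$; $\mathcal A\vDash_\iota\mathsf E_l(t)$ iff $l\le\mu_A(t^{\mathcal A,\iota})$. $\mathcal A$ satisfies $\Gamma\vdash\psi$ if for every assignment $\iota$ with $\mathcal A\vDash_\iota\phi$ for all $\phi\in\Gamma$ one has $\mathcal A\vDash_\iota\psi$. $\mathcal A$ is a model of a theory $\Lambda$ if it satisfies every sequent of $\Lambda$. $\mathbf{Mod}(\Lambda)$ is the full subcategory of the category of $\Sigma$-algebras on the models of $\Lambda$, and $\mathscr U_\Lambda:\mathbf{Mod}(\Lambda)\to\mathbf{Fuz}_H$ is the forgetful functor to carriers; it has a left adjoint $\mathscr F_\Lambda$ (free model functor). *)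

From mathcomp Require Import all_boot.

Set Implicit Arguments.
Unset Strict Implicit.
Unset Printing Implicit Defensive.

Record frame := Frame {
  fr :> Type;
  fle : fr -> fr -> Prop;
  fle_refl : forall x, fle x x;
  fle_trans : forall x y z, fle x y -> fle y z -> fle x z;
  fle_anti : forall x y, fle x y -> fle y x -> x = y;
  fjoin : (fr -> Prop) -> fr;
  fjoin_ub : forall (S : fr -> Prop) x, S x -> fle x (fjoin S);
  fjoin_least : forall (S : fr -> Prop) u, (forall x, S x -> fle x u) -> fle (fjoin S) u;
  fmeet : fr -> fr -> fr;
  fmeet_lbl : forall x y, fle (fmeet x y) x;
  fmeet_lbr : forall x y, fle (fmeet x y) y;
  fmeet_glb : forall x y z, fle z x -> fle z y -> fle z (fmeet x y);
  fmeet_distr : forall a (S : fr -> Prop),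
      fmeet a (fjoin S) = fjoin (fun y => exists s, S s /\ y = fmeet a s)
}.

Definition fbot (H : frame) : H := fjoin (fun _ : H => False).
Definition ftop (H : frame) : H := fjoin (fun _ : H => True).

(* finite meet of a family indexed by 'I_n (top is the unit; only used for n >= 1) *)
Definition bigmeet (H : frame) (n : nat) (g : 'I_n -> H) : H :=
  foldr (@fmeet H) (ftop H) [seq g i | i <- enum 'I_n].

Record fuzzy (H : frame) := Fuzzy { fcar :> Type; fmu : fcar -> H }.

Definition fuz_arrow (H : frame) (A B : fuzzy H) (f : A -> B) : Prop :=
  forall x : A, fle (fmu x) (fmu (f x)).

Definition fpow_mu (H : frame) (A : fuzzy H) (n : nat) (a : 'I_n -> A) : H :=
  bigmeet (fun i => fmu (a i)).

Record signature := Signature {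
  sop : Type;
  sar : sop -> nat;
  sar_pos : forall o, 0 < sar o;
  scst : Type
}.

Record language := Language { lsig : signature; lvar : Type }.

Inductive term (L : language) : Type :=
  | TVar of lvar L
  | TCst of scst (lsig L)
  | TApp (o : sop (lsig L)) of ('I_(sar o) -> term L).

Inductive formula (H : frame) (L : language) : Type :=
  | FEq of term L & term L
  | FMem of H & term L.

Record sequent (H : frame) (L : language) :=
  Sequent { shyps : formula H L -> Prop; sconcl : formula H L }.

Definition theory (H : frame) (L : language) := sequent H L -> Prop.

Definition basic (H : frame) (L : language) (Lam : theory H L) : Prop :=
  forall s, Lam s -> forall phi, shyps s phi ->
    (exists x y : lvar L, phi = FEq H (@TVar L x) (@TVar L y)) \/
    (exists (l : H) (x : lvar L), phi = FMem l (@TVar L x)).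

Record sigalg (H : frame) (S : signature) := SigAlg {
  acar :> fuzzy H;
  aop : forall o : sop S, ('I_(sar o) -> acar) -> acar;
  aop_arrow : forall (o : sop S) (a : 'I_(sar o) -> acar),
      fle (fpow_mu a) (fmu (aop a));
  acst : scst S -> acar
}.

Fixpoint eval (H : frame) (L : language) (A : sigalg H (lsig L))
  (iota : lvar L -> A) (t : term L) : A :=
  match t with
  | TVar x => iota x
  | TCst c => acst A c
  | TApp o ts => aop (fun i => eval iota (ts i))
  end.

Definition sat (H : frame) (L : language) (A : sigalg H (lsig L))
  (iota : lvar L -> A) (phi : formula H L) : Prop :=
  match phi with
  | FEq s t => eval iota s = eval iota t
  | FMem l t => fle l (fmu (eval iota t))
  end.

Definition satisfies (H : frame) (L : language) (A : sigalg H (lsig L))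
  (s : sequent H L) : Prop :=
  forall iota : lvar L -> A,
    (forall phi, shyps s phi -> sat iota phi) -> sat iota (sconcl s).

Definition is_model (H : frame) (L : language) (Lam : theory H L)
  (A : sigalg H (lsig L)) : Prop :=
  forall s, Lam s -> satisfies A s.

Definition alg_morph (H : frame) (S : signature) (A B : sigalg H S)
  (h : A -> B) : Prop :=
  fuz_arrow h /\
  (forall c, h (acst A c) = acst B c) /\
  (forall (o : sop S) (a : 'I_(sar o) -> A), h (aop a) = aop (fun i => h (a i))).

(* A left adjoint F -| U (U : Mod(Lam) -> Fuz_H the forgetful functor), *)
(* given by universal arrows: F X is a model, eta_X : X -> U(F X), and  *)
(* every arrow f : X -> U A (A a model) factors uniquely as             *)
(* U(lift f) o eta_X with lift f : F X -> A a morphism.                 *)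
Section Adjunction.
Variables (H : frame) (L : language) (Lam : theory H L).
Variable F : fuzzy H -> sigalg H (lsig L).
Variable eta : forall X : fuzzy H, X -> F X.
Variable lift : forall (X : fuzzy H) (A : sigalg H (lsig L)), (X -> A) -> F X -> A.

Definition free_adjunction : Prop :=
  forall X : fuzzy H,
    is_model Lam (F X) /\ fuz_arrow (@eta X) /\
    forall A : sigalg H (lsig L), is_model Lam A ->
    forall f : X -> A, fuz_arrow f ->
      alg_morph (@lift X A f) /\
      (forall x, @lift X A f (@eta X x) = f x) /\
      (forall g : F X -> A, alg_morph g -> (forall x, g (@eta X x) = f x) ->
         forall y, g y = @lift X A f y).

Definition TT (X : fuzzy H) : fuzzy H := acar (F X).

Definition Tmap (X Y : fuzzy H) (f : X -> Y) : TT X -> TT Y :=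
  @lift X (F Y) (fun x => @eta Y (f x)).

(* multiplication mu_X = U(eps_{F X}) *)
Definition mult (X : fuzzy H) : TT (TT X) -> TT X :=
  @lift (TT X) (F X) (fun y => y).

Definition counit (A : sigalg H (lsig L)) : TT (acar A) -> A :=
  @lift (acar A) A (fun y => y).

Definition is_EM_alg (X : fuzzy H) (a : TT X -> X) : Prop :=
  @fuz_arrow H (TT X) X a /\
  (forall x : X, a (@eta X x) = x) /\
  (forall z : TT (TT X), a (mult z) = a (Tmap a z)).

Definition EM_morph (X : fuzzy H) (a : TT X -> X) (Y : fuzzy H) (b : TT Y -> Y)
  (h : X -> Y) : Prop :=
  fuz_arrow h /\ (forall z : TT X, h (a z) = b (Tmap h z)).

(* objects of EM(T) (underlying data) *)
Definition EMobj := {X : fuzzy H & TT X -> X}.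

Definition comparison (A : sigalg H (lsig L)) : EMobj :=
  existT (fun X : fuzzy H => TT X -> X) (acar A) (@counit A).

(* K : Mod(Lam) -> EM(T) (identity on arrows) is a well-defined functor
   which is bijective on objects and bijective on hom-sets, i.e. an
   isomorphism of categories. *)
Definition comparison_is_iso : Prop :=
  (forall A : sigalg H (lsig L), is_model Lam A -> is_EM_alg (@counit A)) /\
  (forall (A B : sigalg H (lsig L)) (h : A -> B), is_model Lam A -> is_model Lam B ->
     alg_morph h -> EM_morph (@counit A) (@counit B) h) /\
  (* K is full (faithfulness is automatic: K is the identity on arrows) *)
  (forall (A B : sigalg H (lsig L)) (h : A -> B), is_model Lam A -> is_model Lam B ->
     EM_morph (@counit A) (@counit B) h -> alg_morph h) /\
  (forall (X : fuzzy H) (a : TT X -> X), is_EM_alg a ->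
     exists A, is_model Lam A /\
       comparison A = existT (fun Y : fuzzy H => TT Y -> Y) X a) /\
  (forall A B : sigalg H (lsig L), is_model Lam A -> is_model Lam B ->
     comparison A = comparison B -> A = B).

End Adjunction.

From mathcomp Require Import all_boot.
From Stdlib Require Import ProofIrrelevance FunctionalExtensionality.

(* A model is determined by its carrier and its counit [eps]: an operation
   is [aop xs = eps (aop (eta \o xs))] and a constant is [eps (acst c)].
   This makes the comparison functor injective on objects and, since EM
   morphisms commute with the counits, full.  Conversely an EM algebra
   [a : T X -> X] defines operations by the same formulas; its laws make [a]
   a morphism out of the free model with [a \o eta = id], so terms evaluate in
   X as [a] applied to their value in [F X] under [eta].  As the theory is
   basic, the hypotheses of a sequent only constrain variables and so transfer
   along [eta] to the free model, a model; the conclusion transfers back along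
   [a]. *)

Lemma fuz_arrow_id {H : frame} {X : fuzzy H} : fuz_arrow (fun x : X => x).
Proof. by move=> x; apply: fle_refl. Qed.

Lemma fuz_arrow_comp {H : frame} {X Y Z : fuzzy H} {f : X -> Y} {g : Y -> Z} :
  fuz_arrow f -> fuz_arrow g -> fuz_arrow (fun x => g (f x)).
Proof. by move=> hf hg x; apply: fle_trans (hf x) (hg (f x)). Qed.

Lemma foldr_fmeet_mono {H : frame} {T : Type} {g g' : T -> H} (s : seq T) :
  (forall i, fle (g i) (g' i)) ->
  fle (foldr (@fmeet H) (ftop H) [seq g i | i <- s])
      (foldr (@fmeet H) (ftop H) [seq g' i | i <- s]).
Proof.
move=> le_g; elim: s => [|x s IHs] /=; first exact: fle_refl.
apply: fmeet_glb; first exact: fle_trans (fmeet_lbl _ _) (le_g x).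
exact: fle_trans (fmeet_lbr _ _) IHs.
Qed.

Lemma fpow_mu_arrow {H : frame} {A B : fuzzy H} {n : nat} (xs : 'I_n -> A)
    {f : A -> B} :
  fuz_arrow f -> fle (fpow_mu xs) (fpow_mu (fun i => f (xs i))).
Proof. by move=> hf; apply: foldr_fmeet_mono => i; apply: hf. Qed.

Lemma alg_morph_comp {H : frame} {S : signature} {A B C : sigalg H S}
    {f : A -> B} {g : B -> C} :
  alg_morph f -> alg_morph g -> alg_morph (fun x => g (f x)).
Proof.
move=> [fa_f [cst_f op_f]] [fa_g [cst_g op_g]].
split; first exact: fuz_arrow_comp.
by split=> [c | o xs]; rewrite ?cst_f ?cst_g ?op_f ?op_g.
Qed.

Lemma eval_alg_morph {H : frame} {L : language} {A B : sigalg H (lsig L)}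
    {h : A -> B} (iota : lvar L -> A) (t : term L) :
  alg_morph h -> h (eval iota t) = eval (fun x => h (iota x)) t.
Proof.
move=> [_ [cst_h op_h]]; elim: t => [x | c | o ts IHts] //=.
by rewrite op_h; congr aop; apply: functional_extensionality.
Qed.

Lemma sigalg_ext {H : frame} {S : signature} {X : fuzzy H}
    {op1 op2 : forall o : sop S, ('I_(sar o) -> X) -> X} {ar1 ar2}
    {c1 c2 : scst S -> X} :
  op1 = op2 -> c1 = c2 -> SigAlg (aop:=op1) ar1 c1 = SigAlg (aop:=op2) ar2 c2.
Proof. by move=> eq_op eq_c; subst; rewrite (proof_irrelevance _ ar1 ar2). Qed.

Section FreeModels.

Variables (H : frame) (L : language) (Lam : theory H L).
Variable F : fuzzy H -> sigalg H (lsig L).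
Variable eta : forall X : fuzzy H, X -> F X.
Variable lift : forall (X : fuzzy H) (A : sigalg H (lsig L)), (X -> A) -> F X -> A.
Hypothesis adj : free_adjunction Lam eta lift.
Arguments eta {X}.
Arguments lift {X A}.

Local Notation T := (TT F).
Local Notation eps A := (@counit _ _ F (@lift) A).
Local Notation Tmap := (Tmap (@eta) (@lift)).

Lemma free_model (X : fuzzy H) : is_model Lam (F X).
Proof. by case: (adj X). Qed.

Lemma eta_arrow (X : fuzzy H) : fuz_arrow (@eta X).
Proof. by case: (adj X) => _ []. Qed.

Section Lift.

Context {X : fuzzy H} {A : sigalg H (lsig L)} {f : X -> A}.
Hypotheses (modelA : is_model Lam A) (fa_f : fuz_arrow f).

Lemma lift_morph : alg_morph (lift f).
Proof. by have [_ [_ /(_ A modelA f fa_f) []]] := adj X. Qed.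

Lemma lift_eta x : lift f (eta x) = f x.
Proof. by have [_ [_ /(_ A modelA f fa_f) [_ []]]] := adj X. Qed.

End Lift.

Lemma morph_eta_ext {X : fuzzy H} {A : sigalg H (lsig L)} {g1 g2 : F X -> A} :
    is_model Lam A -> alg_morph g1 -> alg_morph g2 ->
    (forall x, g1 (eta x) = g2 (eta x)) ->
  forall y, g1 y = g2 y.
Proof.
move=> modelA mg1 mg2 eq_eta y.
have fa_g2eta := fuz_arrow_comp (eta_arrow X) mg2.1.
have [_ [_ /(_ A modelA _ fa_g2eta) [_ [_ uniq_lift]]]] := adj X.
by rewrite (uniq_lift g1) ?(uniq_lift g2).
Qed.

Lemma Tmap_morph {X Y : fuzzy H} {f : X -> Y} :
  fuz_arrow f -> @alg_morph H (lsig L) (F X) (F Y) (Tmap f).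
Proof.
move=> fa_f.
exact: lift_morph (free_model Y) (fuz_arrow_comp fa_f (eta_arrow Y)).
Qed.

Lemma Tmap_eta {X Y : fuzzy H} {f : X -> Y} x :
  fuz_arrow f -> Tmap f (eta x) = eta (f x).
Proof.
move=> fa_f.
exact: lift_eta (free_model Y) (fuz_arrow_comp fa_f (eta_arrow Y)) x.
Qed.

Lemma mult_morph (X : fuzzy H) :
  @alg_morph H (lsig L) (F (T X)) (F X) (mult (@lift) (X:=X)).
Proof. exact: lift_morph (free_model X) fuz_arrow_id. Qed.

Lemma mult_eta (X : fuzzy H) (y : T X) : mult (@lift) (eta y) = y.
Proof. exact: lift_eta (free_model X) fuz_arrow_id y. Qed.

Section Counit.

Context {A : sigalg H (lsig L)}.
Hypothesis modelA : is_model Lam A.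

Lemma counit_morph : @alg_morph H (lsig L) (F A) A (eps A).
Proof. exact: lift_morph modelA fuz_arrow_id. Qed.

Lemma counit_eta (x : A) : eps A (eta x) = x.
Proof. exact: lift_eta modelA fuz_arrow_id x. Qed.

Lemma aop_counit {o} (xs : 'I_(sar o) -> A) :
  aop xs = eps A (aop (fun i => eta (xs i))).
Proof.
have [_ [_ ->]] := counit_morph.
by congr aop; apply: functional_extensionality => i; rewrite counit_eta.
Qed.

Lemma acst_counit c : acst A c = eps A (acst (F A) c).
Proof. by have [_ [-> _]] := counit_morph. Qed.

Lemma counit_EM_alg : is_EM_alg (@eta) (@lift) (eps A).
Proof.
have [fa_eps _] := counit_morph.
split; first exact: fa_eps.
split=> [|z]; first exact: counit_eta.
apply: (morph_eta_ext modelA (alg_morph_comp (mult_morph _) counit_morph)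
  (alg_morph_comp (Tmap_morph fa_eps) counit_morph)) => x /=.
by rewrite mult_eta Tmap_eta // counit_eta.
Qed.

End Counit.

Lemma counit_EM_morph (A B : sigalg H (lsig L)) (h : A -> B) :
    is_model Lam A -> is_model Lam B ->
  alg_morph h -> EM_morph (@eta) (@lift) (eps A) (eps B) h.
Proof.
move=> modelA modelB mh; split=> [|z]; first exact: mh.1.
apply: (morph_eta_ext modelB (alg_morph_comp (counit_morph modelA) mh)
  (alg_morph_comp (Tmap_morph mh.1) (counit_morph modelB))) => x /=.
by rewrite Tmap_eta ?counit_eta //; apply: mh.1.
Qed.

Lemma EM_morph_alg_morph (A B : sigalg H (lsig L)) (h : A -> B) :
    is_model Lam A -> is_model Lam B ->
  EM_morph (@eta) (@lift) (eps A) (eps B) h -> alg_morph h.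
Proof.
move=> modelA modelB [fa_h h_eps].
have [_ [cst_T op_T]] := Tmap_morph fa_h.
have [_ [cst_eps op_eps]] := counit_morph modelB.
split; first exact: fa_h.
split=> [c | o xs].
  by rewrite acst_counit // h_eps cst_T cst_eps.
rewrite aop_counit // h_eps op_T op_eps; congr aop.
by apply: functional_extensionality => i; rewrite Tmap_eta ?counit_eta.
Qed.

Lemma comparison_inj (A B : sigalg H (lsig L)) :
    is_model Lam A -> is_model Lam B ->
  comparison (@lift) A = comparison (@lift) B -> A = B.
Proof.
move: A B => [X opA arA cstA] [Y opB arB cstB] modelA modelB eqK.
have eqXY : X = Y := f_equal (@projT1 _ _) eqK; subst Y.
have eq_eps := inj_pair2 _ _ _ _ _ eqK.
apply: sigalg_ext.
  apply: functional_extensionality_dep => o; apply: functional_extensionality => xs.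
  move: (aop_counit modelA xs) (aop_counit modelB xs) => /= -> ->.
  by rewrite eq_eps.
apply: functional_extensionality => c.
move: (acst_counit modelA c) (acst_counit modelB c) => /= -> ->.
by rewrite eq_eps.
Qed.

Section EMAlgebra.

Context {X : fuzzy H} {a : T X -> X}.
Hypothesis a_EM : is_EM_alg (@eta) (@lift) a.

Let fa_a : fuz_arrow a := a_EM.1.
Let a_eta : forall x, a (eta x) = x := a_EM.2.1.

Definition EM_aop (o : sop (lsig L)) (xs : 'I_(sar o) -> X) : X :=
  a (aop (fun i => eta (xs i))).

Lemma EM_aop_arrow o (xs : 'I_(sar o) -> X) :
  fle (fpow_mu xs) (fmu (EM_aop o xs)).
Proof.
apply: fle_trans (fpow_mu_arrow xs (eta_arrow X)) _.
exact: fle_trans (aop_arrow _) (fa_a _).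
Qed.

Definition EM_sigalg : sigalg H (lsig L) :=
  SigAlg EM_aop_arrow (fun c => a (acst (F X) c)).

Lemma EM_alg_morph : @alg_morph H (lsig L) (F X) EM_sigalg a.
Proof.
split; first exact: fa_a.
split=> // o ts; rewrite /= /EM_aop.
have [_ [_ mult_op]] := mult_morph X.
have [_ [_ Tmap_op]] := Tmap_morph fa_a.
have [_ [_ assoc]] := a_EM.
transitivity (a (mult (@lift) (aop (fun i => eta (ts i))))).
  rewrite mult_op; congr (a (aop _)).
  by apply: functional_extensionality => i; rewrite mult_eta.
rewrite assoc Tmap_op; congr (a (aop _)).
by apply: functional_extensionality => i; rewrite Tmap_eta.
Qed.

Lemma eval_EM_sigalg (iota : lvar L -> X) (t : term L) :
  eval (A:=EM_sigalg) iota t = a (eval (A:=F X) (fun x => eta (iota x)) t).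
Proof.
rewrite (eval_alg_morph _ _ EM_alg_morph).
by congr eval; apply: functional_extensionality => x; rewrite a_eta.
Qed.

Lemma EM_sigalg_model : basic Lam -> is_model Lam EM_sigalg.
Proof.
move=> basicLam s Lam_s iota sat_hyps.
have sat_free : sat (A:=F X) (fun x => eta (iota x)) (sconcl s).
  apply: (free_model X _ Lam_s) => phi hyp_phi.
  move: (sat_hyps _ hyp_phi).
  case: (basicLam s Lam_s phi hyp_phi) => [[x [y ->]] | [l [x ->]]] /=.
    by move=> ->.
  by move=> le_l; apply: fle_trans le_l (eta_arrow X _).
move: sat_free; case: (sconcl s) => [u v | l u] /=; rewrite !eval_EM_sigalg.
  by move=> ->.
by move=> le_l; apply: fle_trans le_l (fa_a _).
Qed.

Lemma counit_EM_sigalg : basic Lam -> eps EM_sigalg = a.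
Proof.
move=> basicLam; have modelA := EM_sigalg_model basicLam.
apply: functional_extensionality => y.
apply: (morph_eta_ext modelA (counit_morph modelA) EM_alg_morph) => x.
by rewrite (counit_eta modelA) a_eta.
Qed.

End EMAlgebra.

End FreeModels.

Arguments EM_sigalg {H L Lam F eta lift} adj {X a}.

Theorem theorem43 (H : frame) (L : language) (Lam : theory H L)
  (F : fuzzy H -> sigalg H (lsig L))
  (eta : forall X : fuzzy H, X -> F X)
  (lift : forall (X : fuzzy H) (A : sigalg H (lsig L)), (X -> A) -> F X -> A) :
  basic Lam ->
  @free_adjunction H L Lam F eta lift ->
  @comparison_is_iso H L Lam F eta lift.
Proof.
move=> basicLam adj.
split; first by move=> A; apply: counit_EM_alg.
split; first by move=> A B h; apply: counit_EM_morph.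
split; first by move=> A B h; apply: EM_morph_alg_morph.
split; last by move=> A B; apply: comparison_inj.
move=> X a a_EM; exists (EM_sigalg adj a_EM).
split; first exact: EM_sigalg_model.
by rewrite /comparison counit_EM_sigalg.
Qed.
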